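(* Let $\langle A,g\rangle$ be an interior algebra. If $A^*$ is a retract of $A$, then $A=A^*$.
   Context: An interior algebra is a Boolean algebra with an operator $g$ satisfying $g(1)=1$, $g(xy)=g(x)g(y)$, $g(x)\le x$, $gg(x)=g(x)$; $a$ is open if $g(a)=a$. $A^*$ denotes the subalgebra of $A$ generated by the open elements of $A$. $A^*$ is a retract of $A$ if there is a surjective homomorphism $p\colon A\to A^*$ whose restriction to $A^*$ is the identity. *)

From HB Require Import structures.
From mathcomp Require Import all_boot all_order.
Set Implicit Arguments. Unset Strict Implicit. Unset Printing Implicit Defensive.
Import Order.Theory.
Local Open Scope order_scope.

(* A Boolean algebra is a complemented (top/bottom) distributive lattice:
   ctbDistrLatticeType d.  An interior operator g on it: *)
Definition interior_op d (A : ctbDistrLatticeType d) (g : A -> A) : Prop :=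
  [/\ g \top = \top,
      (forall x y, g (x `&` y) = g x `&` g y),
      (forall x, g x <= x) &
      (forall x, g (g x) = g x)].

Definition is_open d (A : ctbDistrLatticeType d) (g : A -> A) (a : A) : Prop :=
  g a = a.

Inductive Astar d (A : ctbDistrLatticeType d) (g : A -> A) : A -> Prop :=
  | Astar_open a : is_open g a -> Astar g a
  | Astar_top : Astar g \top
  | Astar_bot : Astar g \bot
  | Astar_compl a : Astar g a -> Astar g (~` a)
  | Astar_meet a b : Astar g a -> Astar g b -> Astar g (a `&` b)
  | Astar_join a b : Astar g a -> Astar g b -> Astar g (a `|` b).

(* Homomorphism of interior algebras (Boolean operations and g preserved),
   here as a map A -> A (its target being A^* with the restricted operator). *)
Definition interior_hom d (A : ctbDistrLatticeType d) (g : A -> A) (p : A -> A) : Prop :=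
  [/\ p \top = \top /\ p \bot = \bot,
      (forall x y, p (x `&` y) = p x `&` p y),
      (forall x y, p (x `|` y) = p x `|` p y),
      (forall x, p (~` x) = ~` p x) &
      (forall x, p (g x) = g (p x))].

Definition Astar_retract d (A : ctbDistrLatticeType d) (g : A -> A) : Prop :=
  exists p : A -> A,
    [/\ (forall x, Astar g (p x)),
        interior_hom g p,
        (forall y, Astar g y -> exists x, p x = y) &
        (forall x, Astar g x -> p x = x)].

From mathcomp Require Import all_boot all_order.
Set Implicit Arguments. Unset Strict Implicit. Unset Printing Implicit Defensive.
Import Order.Theory.
Local Open Scope order_scope.

(* A retraction p onto A^* fixes the open elements and commutes with g, so
   p u = 1 forces g u = g (p u) = 1, hence u = 1: p reflects the top element.
   An idempotent Boolean endomorphism reflecting the top is the identity,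
   because it sends the implications x -> p x and p x -> x to 1.  Thus every
   x equals p x, which lies in A^*. *)

Lemma leEjoinC d (A : ctbDistrLatticeType d) (x y : A) :
  (x <= y) = (~` x `|` y == \top).
Proof.
apply/esym; rewrite -diff_eq0 diffE -[x in x `&` _]complK -complU.
by apply/eqP/eqP=> [->|/(congr1 Order.compl)]; rewrite ?compl1 // complK compl0.
Qed.

Lemma deflationary_eq1 d (A : tPOrderType d) (g : A -> A) (u : A) :
  (forall x, g x <= x) -> g u = \top -> u = \top.
Proof. by move=> g_le gu; apply/eqP; rewrite eq_le lex1 -gu g_le. Qed.

Lemma idempotent_hom_reflect_top_id d (A : ctbDistrLatticeType d) (p : A -> A) :
  {morph p : x y / x `|` y} -> {morph p : x / ~` x} -> idempotent_fun p ->
  (forall u, p u = \top -> u = \top) -> p =1 id.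
Proof.
move=> pJ pC p_idem p_top x.
have p_impl y z : p z = p y -> ~` y `|` z = \top.
  by move=> pzy; apply: p_top; rewrite pJ pC pzy joinCx.
have ppx : p (p x) = p x := p_idem x.
by apply/eqP; rewrite eq_le !leEjoinC !p_impl ?ppx ?eqxx.
Qed.

Lemma retract_reflect_top d (A : ctbDistrLatticeType d) (g p : A -> A) :
  interior_op g -> (forall a, is_open g a -> p a = a) ->
  (forall x, p (g x) = g (p x)) ->
  forall u, p u = \top -> u = \top.
Proof.
case=> g1 _ g_le gg p_open pg u pu.
have gu : g u = \top by rewrite -(p_open (g u)) ?pg ?pu // /is_open gg.
exact: deflationary_eq1 g_le gu.
Qed.

Theorem lemma4p4 (d : Order.disp_t) (A : ctbDistrLatticeType d) (g : A -> A) :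
  interior_op g -> Astar_retract g -> forall x : A, Astar g x.
Proof.
move=> g_int [p [pA [_ _ pJ pC pg] _ p_fix]] x.
have p_open a : is_open g a -> p a = a by move=> oa; exact/p_fix/Astar_open.
have p_idem : idempotent_fun p by move=> y; exact/p_fix/pA.
have p_id := idempotent_hom_reflect_top_id pJ pC p_idem
                (retract_reflect_top g_int p_open pg).
by rewrite -(p_id x).
Qed.
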